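(* Let $\mathcal{F}=(W,\preceq,\mathcal{V})$ be a finite poset model and $B\subseteq W\times W$ a weak $\pm$-bisimulation. For all $w_1,w_2$ with $B(w_1,w_2)$ and every $\uparrow\!\downarrow$-path $\pi_1:[0;2h]\to W$ from $w_1$, there is a $\downarrow$-path $\pi_2:[0;k]\to W$ from $w_2$ such that $B(\pi_1(2h),\pi_2(k))$ and for each $j\in[0;k)$ there is $i\in[0;2h)$ with $B(\pi_1(i),\pi_2(j))$.
   Context: Fix a set PL of proposition letters. A poset model is $\mathcal{F}=(W,\preceq,\mathcal{V})$ with $(W,\preceq)$ a partial order and $\mathcal{V}:\mathrm{PL}\to\mathcal{P}(W)$. $[m;n]=\{i\in\mathbb{N}:m\le i\le n\}$, $[m;n)=\{i:m\le i<n\}$. An undirected path of length $\ell$ from $w$ is $\pi:[0;\ell]\to W$ with $\pi(0)=w$ and, for each $i\in[0;\ell)$, $\pi(i)\preceq\pi(i+1)$ or $\pi(i+1)\preceq\pi(i)$. A $\downarrow$-path is an undirected path of length $\ell\ge1$ with $\pi(\ell)\preceq\pi(\ell-1)$. A $\pm$-path is a $\downarrow$-path of length $\ell\ge2$ with $\pi(0)\preceq\pi(1)$. An $\uparrow\!\downarrow$-path of length $2h$ ($h\ge1$) satisfies $\pi(2i)\preceq\pi(2i+1)\succeq\pi(2i+2)$ for all $i\in[0;h)$. A weak $\pm$-bisimulation is a symmetric relation $B\subseteq W\times W$ such that whenever $B(w_1,w_2)$: (1) for every $p\in\mathrm{PL}$, $w_1\in\mathcal{V}(p)$ iff $w_2\in\mathcal{V}(p)$;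 (2) for all $u_1,d_1\in W$ with ($w_1\preceq u_1$ or $u_1\preceq w_1$) and $d_1\preceq u_1$, there is a $\pm$-path $\pi_2:[0;\ell_2]\to W$ from $w_2$ with $B(d_1,\pi_2(\ell_2))$ and, for all $j\in[0;\ell_2)$, $B(w_1,\pi_2(j))$ or $B(u_1,\pi_2(j))$. *)

From mathcomp Require Import all_boot.
Set Implicit Arguments. Unset Strict Implicit. Unset Printing Implicit Defensive.

Definition is_partial_order (W : Type) (le : W -> W -> Prop) : Prop :=
  (forall x, le x x) /\
  (forall x y, le x y -> le y x -> x = y) /\
  (forall x y z, le x y -> le y z -> le x z).

(* Paths are functions nat -> W; only the values on [0; l] are relevant. *)
Definition undirected_path (W : Type) (le : W -> W -> Prop)
    (pi : nat -> W) (l : nat) (w : W) : Prop :=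
  pi 0 = w /\ forall i, i < l -> le (pi i) (pi i.+1) \/ le (pi i.+1) (pi i).

Definition down_path (W : Type) (le : W -> W -> Prop)
    (pi : nat -> W) (l : nat) (w : W) : Prop :=
  undirected_path le pi l w /\ 1 <= l /\ le (pi l) (pi l.-1).

Definition pm_path (W : Type) (le : W -> W -> Prop)
    (pi : nat -> W) (l : nat) (w : W) : Prop :=
  down_path le pi l w /\ 2 <= l /\ le (pi 0) (pi 1).

Definition updown_path (W : Type) (le : W -> W -> Prop)
    (pi : nat -> W) (h : nat) (w : W) : Prop :=
  1 <= h /\ pi 0 = w /\
  forall i, i < h -> le (pi (2 * i)) (pi (2 * i).+1) /\ le (pi (2 * i).+2) (pi (2 * i).+1).

Definition weak_pm_bisimulation (PL W : Type) (le : W -> W -> Prop)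
    (V : PL -> W -> Prop) (B : W -> W -> Prop) : Prop :=
  (forall x y, B x y -> B y x) /\
  forall w1 w2, B w1 w2 ->
    (forall p : PL, V p w1 <-> V p w2) /\
    (forall u1 d1, (le w1 u1 \/ le u1 w1) -> le d1 u1 ->
       exists (pi2 : nat -> W) (l2 : nat),
         pm_path le pi2 l2 w2 /\ B d1 (pi2 l2) /\
         forall j, j < l2 -> B w1 (pi2 j) \/ B u1 (pi2 j)).

From mathcomp Require Import all_boot.
From mathcomp Require Import zify.

Set Implicit Arguments.
Unset Strict Implicit.
Unset Printing Implicit Defensive.

(* The first zigzag
   w1 <= pi1 1 >= pi1 2 is matched by the weak bisimulation with a
   pm-path from w2 ending in a B-partner of pi1 2; the remaining h - 1
   zigzags, which start at pi1 2, are matched by induction from that end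
   point, and the two paths are concatenated. *)

Section PathConcatenation.

Variables (W : Type) (le : W -> W -> Prop).

Definition path_cat (pi : nat -> W) (l : nat) (rho : nat -> W) : nat -> W :=
  fun j => if j <= l then pi j else rho (j - l).

Lemma path_cat_left pi l rho j : j <= l -> path_cat pi l rho j = pi j.
Proof. by rewrite /path_cat => ->. Qed.

Lemma path_cat_right pi l rho j : l < j -> path_cat pi l rho j = rho (j - l).
Proof. by move=> lt_lj; rewrite /path_cat leqNgt lt_lj. Qed.

Lemma path_cat_shift pi l rho j :
  rho 0 = pi l -> path_cat pi l rho (l + j) = rho j.
Proof.
move=> rho0; case: j => [|j]; first by rewrite addn0 path_cat_left.
by rewrite path_cat_right ?addKn //; lia.
Qed.

Lemma undirected_path_cat pi l rho k w :
  undirected_path le pi l w -> undirected_path le rho k (pi l) ->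
  undirected_path le (path_cat pi l rho) (l + k) w.
Proof.
move=> [pi0 pi_step] [rho0 rho_step]; split; first by rewrite path_cat_left.
move=> i lt_i_lk; case: (ltnP i l) => [lt_il | le_li].
  by rewrite !path_cat_left //; [exact: pi_step | exact: ltnW].
have [j def_i] : exists j, i = l + j by exists (i - l); lia.
rewrite {}def_i in lt_i_lk *; rewrite -addnS !path_cat_shift //.
apply: rho_step; lia.
Qed.

Lemma down_path_cat pi l rho k w :
  undirected_path le pi l w -> down_path le rho k (pi l) ->
  down_path le (path_cat pi l rho) (l + k) w.
Proof.
move=> pi_path [rho_path [k_gt0 rho_last]]; split.
  exact: undirected_path_cat.
split; first lia.
have -> : (l + k).-1 = l + k.-1 by lia.
by rewrite !path_cat_shift //; case: rho_path.
Qed.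

End PathConcatenation.

Lemma updown_path_behead (W : Type) (le : W -> W -> Prop) pi h w :
  updown_path le pi h.+2 w -> updown_path le (fun i => pi i.+2) h.+1 (pi 2).
Proof.
move=> [_ [_ zigzag]]; do 2 split => //.
by move=> i lt_ih; have := zigzag i.+1 lt_ih; rewrite mulnS.
Qed.

Section UpdownSimulation.

Variables (PL W : Type) (le : W -> W -> Prop) (V : PL -> W -> Prop).
Variable B : W -> W -> Prop.
Hypothesis B_bisim : weak_pm_bisimulation le V B.

Lemma first_zigzag_simulation w1 w2 pi1 h :
  B w1 w2 -> updown_path le pi1 h w1 ->
  exists (pi2 : nat -> W) (l : nat),
    pm_path le pi2 l w2 /\ B (pi1 2) (pi2 l) /\
    forall j, j < l -> exists i, i < 2 /\ B (pi1 i) (pi2 j).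
Proof.
move=> Bw [h_gt0 [pi10 zigzag]]; have [up down] := zigzag 0 h_gt0.
rewrite pi10 in up down.
have [pi2 [l [pm_pi2 [B_end B_mid]]]] :=
  (B_bisim.2 _ _ Bw).2 (pi1 1) (pi1 2) (or_introl up) down.
exists pi2, l; do 2 split => //.
by move=> j /B_mid [Bj | Bj]; [exists 0; rewrite pi10 | exists 1].
Qed.

Lemma updown_path_simulation h w1 w2 pi1 :
  B w1 w2 -> updown_path le pi1 h w1 ->
  exists (pi2 : nat -> W) (k : nat),
    down_path le pi2 k w2 /\ B (pi1 (2 * h)) (pi2 k) /\
    forall j, j < k -> exists i, i < 2 * h /\ B (pi1 i) (pi2 j).
Proof.
case: h => [|n]; first by move=> _ [].
elim: n w1 w2 pi1 => [|n IH] w1 w2 pi1 Bw updown.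
  have [pi2 [l [[down_pi2 _] matched]]] := first_zigzag_simulation Bw updown.
  by exists pi2, l.
have [pi2 [l [[[pi2_path _] _] [B_end B_mid]]]] :=
  first_zigzag_simulation Bw updown.
have [rho [k [down_rho [B_rho_end B_rho_mid]]]] :=
  IH _ _ _ B_end (updown_path_behead updown).
have rho0 : rho 0 = pi2 l by case: down_rho => [[]].
exists (path_cat pi2 l rho), (l + k); split; first exact: down_path_cat.
split; first by rewrite path_cat_shift // mulnS.
move=> j lt_j_lk; case: (ltnP j l) => [lt_jl | le_lj].
  have [i [lt_i2 Bi]] := B_mid j lt_jl.
  by exists i; rewrite path_cat_left ?(ltnW lt_jl); split=> //; lia.
have [j' def_j] : exists j', j = l + j' by exists (j - l); lia.
rewrite {}def_j in lt_j_lk *.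
have [i [lt_i Bi]] := B_rho_mid j' ltac:(lia).
by exists i.+2; rewrite path_cat_shift //; split=> //; lia.
Qed.

End UpdownSimulation.

Theorem lemma7 (PL : Type) (W : finType) (le : W -> W -> Prop)
    (V : PL -> W -> Prop) (B : W -> W -> Prop) :
  is_partial_order le ->
  weak_pm_bisimulation le V B ->
  forall (w1 w2 : W), B w1 w2 ->
  forall (pi1 : nat -> W) (h : nat), updown_path le pi1 h w1 ->
  exists (pi2 : nat -> W) (k : nat),
    down_path le pi2 k w2 /\ B (pi1 (2 * h)) (pi2 k) /\
    forall j, j < k -> exists i, i < 2 * h /\ B (pi1 i) (pi2 j).
Proof.
move=> _ B_bisim w1 w2 Bw pi1 h updown.
exact: (updown_path_simulation B_bisim Bw updown).
Qed.
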